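(* If an atomic flow $A$ is normal for $\mathsf w$ and $A\to_{\mathsf c}^\star B$, then $B$ is normal for $\mathsf w$.
   Context: An atomic flow is a tuple $(V,E,\eta,up,lo)$: finite sets of vertices and edges, a labelling of vertices by interaction, cut, weakening, coweakening, contraction or cocontraction, and maps $up:E\to V\cup\{\top\}$, $lo:E\to V\cup\{\bot\}$. Upper edges of $\nu$: $lo(\epsilon)=\nu$; lower edges: $up(\epsilon)=\nu$. (Upper, lower) edge numbers: $(0,2)$ interaction, $(2,0)$ cut, $(0,1)$ weakening, $(1,0)$ coweakening, $(2,1)$ contraction, $(1,2)$ cocontraction; no directed cycles; there is $\pi:E\to\{+,-\}$ giving all edges of a (co)contraction the same sign and the two edges of an interaction/cut different signs. A flow is normal for $\mathsf w$ if none of the following patterns occurs in it: a weakening whose lower edge is an upper edge of a contraction, of a cut, or is the upper edge of a cocontraction or of a coweakening; a coweakening whose upper edge is a lower edge of a cocontraction, of an interaction, or is the lower edge of a contraction. $\to_{\mathsf c}^\star$ is the reflexive-transitive closure of $\to_{\mathsf c}$, where $A\to_{\mathsf c}B$ means $B$ results from $A$ by one of these subgraph replacements: (c1) a contraction with upper edges $\epsilon_1,\epsilon_2$ whose lower edge is an upper edge of a cut with other upper edge $\epsilon_3$: replace by a new cocontraction with upper edge $\epsilon_3$ and new lower edges $\delta_1,\delta_2$, and two new cuts with upper edges $\{\epsilon_1,\delta_1\}$ and $\{\epsilon_2,\delta_2\}$; (c2) an interaction with lower edges $\epsilon_3,\epsilon_4$ where $\epsilon_4$ is the upper edge of a cocontraction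 with lower edges $\epsilon_1,\epsilon_2$: replace by a new contraction with lower edge $\epsilon_3$ and new upper edges $\delta_1,\delta_2$, and two new interactions with lower edges $\{\epsilon_1,\delta_1\}$ and $\{\epsilon_2,\delta_2\}$; (c3) a contraction with upper edges $\epsilon_1,\epsilon_2$ whose lower edge is the upper edge of a cocontraction with lower edges $\epsilon_3,\epsilon_4$: replace by cocontractions $\kappa_1,\kappa_2$ with upper edges $\epsilon_1,\epsilon_2$, contractions $\gamma_3,\gamma_4$ with lower edges $\epsilon_3,\epsilon_4$, and four new edges, one from each $\kappa_i$ to each $\gamma_j$. *)

From HB Require Import structures.
From mathcomp Require Import all_boot.
Set Implicit Arguments. Unset Strict Implicit. Unset Printing Implicit Defensive.

Inductive kind := Int | Cut | Wk | Cowk | Ctr | Coctr.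

Definition kind_eq_dec : forall x y : kind, {x = y} + {x <> y}.
Proof. decide equality. Defined.
HB.instance Definition _ := comparableMixin kind_eq_dec.

(* (number of upper edges, number of lower edges) *)
Definition arity (k : kind) : nat * nat :=
  match k with
  | Int => (0, 2) | Cut => (2, 0) | Wk => (0, 1) | Cowk => (1, 0)
  | Ctr => (2, 1) | Coctr => (1, 2)
  end.

(* A (pre)flow: vertices and edges are natural-number names listed in fV, fE.
   up e = None means up(e) = top, lo e = None means lo(e) = bottom.
   lab / up / lo are only meaningful on fV / fE. *)
Record flow := Flow {
  fV : seq nat;
  fE : seq nat;
  lab : nat -> kind;
  up : nat -> option nat;
  lo : nat -> option nat }.

Definition upper_edges (A : flow) (v : nat) := [seq e <- fE A | lo A e == Some v].
Definition lower_edges (A : flow) (v : nat) := [seq e <- fE A | up A e == Some v].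

Definition follows (A : flow) (e e' : nat) : bool :=
  (lo A e != None) && (lo A e == up A e').

Definition atomic_flow (A : flow) : Prop :=
  uniq (fV A) /\ uniq (fE A) /\
  (forall e v, e \in fE A -> up A e = Some v -> v \in fV A) /\
  (forall e v, e \in fE A -> lo A e = Some v -> v \in fV A) /\
  (forall v, v \in fV A ->
     size (upper_edges A v) = (arity (lab A v)).1 /\
     size (lower_edges A v) = (arity (lab A v)).2) /\
  (forall s : seq nat, s != [::] -> all (fun e => e \in fE A) s ->
     ~~ cycle (follows A) s) /\
  (exists pi : nat -> bool,
    forall v, v \in fV A ->
      (lab A v = Ctr \/ lab A v = Coctr ->
         forall e1 e2, e1 \in upper_edges A v ++ lower_edges A v ->
                       e2 \in upper_edges A v ++ lower_edges A v ->
                       pi e1 = pi e2) /\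
      (lab A v = Int \/ lab A v = Cut ->
         forall e1 e2, e1 \in upper_edges A v ++ lower_edges A v ->
                       e2 \in upper_edges A v ++ lower_edges A v ->
                       e1 != e2 -> pi e1 != pi e2)).

Definition normal_w (A : flow) : Prop :=
  (forall e w v, e \in fE A -> up A e = Some w -> lo A e = Some v ->
     lab A w = Wk ->
     ~ (lab A v = Ctr \/ lab A v = Cut \/ lab A v = Coctr \/ lab A v = Cowk)) /\
  (forall e c v, e \in fE A -> lo A e = Some c -> up A e = Some v ->
     lab A c = Cowk ->
     ~ (lab A v = Coctr \/ lab A v = Int \/ lab A v = Ctr)).

(* B results from A by deleting vertices dV and edges dE, adding fresh
   vertices nV (with labels) and fresh edges nE (with their up/lo), and
   redirecting the old edges listed in md (with their new up/lo);
   everything else is unchanged. *)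
Definition replaced (A B : flow) (dV dE : seq nat) (nV : seq (nat * kind))
    (nE md : seq (nat * option nat * option nat)) : Prop :=
  (uniq (map fst nV) /\ all (fun v => v \notin fV A) (map fst nV)) /\
  (uniq (map (fun t => t.1.1) nE) /\
     all (fun e => e \notin fE A) (map (fun t => t.1.1) nE)) /\
  (forall v, (v \in fV B) = ((v \in fV A) && (v \notin dV)) || (v \in map fst nV)) /\
  (forall v, v \in fV A -> v \notin dV -> lab B v = lab A v) /\
  (forall v k, (v, k) \in nV -> lab B v = k) /\
  (forall e, (e \in fE B) =
     ((e \in fE A) && (e \notin dE)) || (e \in map (fun t => t.1.1) nE)) /\
  (forall e u l, (e, u, l) \in nE ++ md -> up B e = u /\ lo B e = l) /\
  (forall e, e \in fE A -> e \notin dE -> e \notin map (fun t => t.1.1) md ->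
     up B e = up A e /\ lo B e = lo A e).

(* (c1) a contraction whose lower edge is an upper edge of a cut *)
Definition c1_step (A B : flow) : Prop :=
  exists g k e1 e2 e e3,
    g \in fV A /\ k \in fV A /\ lab A g = Ctr /\ lab A k = Cut /\
    e1 \in fE A /\ e2 \in fE A /\ e \in fE A /\ e3 \in fE A /\
    e1 != e2 /\ lo A e1 = Some g /\ lo A e2 = Some g /\ up A e = Some g /\
    lo A e = Some k /\ e3 != e /\ lo A e3 = Some k /\
    exists k' c1 c2 d1 d2,
      replaced A B [:: g; k] [:: e] [:: (k', Coctr); (c1, Cut); (c2, Cut)]
        [:: (d1, Some k', Some c1); (d2, Some k', Some c2)]
        [:: (e1, up A e1, Some c1); (e2, up A e2, Some c2);
            (e3, up A e3, Some k')].

(* (c2) an interaction one of whose lower edges is the upper edge of a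
   cocontraction *)
Definition c2_step (A B : flow) : Prop :=
  exists i k e3 e4 e1 e2,
    i \in fV A /\ k \in fV A /\ lab A i = Int /\ lab A k = Coctr /\
    e1 \in fE A /\ e2 \in fE A /\ e3 \in fE A /\ e4 \in fE A /\
    e3 != e4 /\ up A e3 = Some i /\ up A e4 = Some i /\ lo A e4 = Some k /\
    e1 != e2 /\ up A e1 = Some k /\ up A e2 = Some k /\
    exists g i1 i2 d1 d2,
      replaced A B [:: i; k] [:: e4] [:: (g, Ctr); (i1, Int); (i2, Int)]
        [:: (d1, Some i1, Some g); (d2, Some i2, Some g)]
        [:: (e3, Some g, lo A e3); (e1, Some i1, lo A e1);
            (e2, Some i2, lo A e2)].

(* (c3) a contraction whose lower edge is the upper edge of a cocontraction *)
Definition c3_step (A B : flow) : Prop :=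
  exists g k e1 e2 e e3 e4,
    g \in fV A /\ k \in fV A /\ lab A g = Ctr /\ lab A k = Coctr /\
    e1 \in fE A /\ e2 \in fE A /\ e \in fE A /\ e3 \in fE A /\ e4 \in fE A /\
    e1 != e2 /\ lo A e1 = Some g /\ lo A e2 = Some g /\ up A e = Some g /\
    lo A e = Some k /\ e3 != e4 /\ up A e3 = Some k /\ up A e4 = Some k /\
    exists k1 k2 g3 g4 f13 f14 f23 f24,
      replaced A B [:: g; k] [:: e]
        [:: (k1, Coctr); (k2, Coctr); (g3, Ctr); (g4, Ctr)]
        [:: (f13, Some k1, Some g3); (f14, Some k1, Some g4);
            (f23, Some k2, Some g3); (f24, Some k2, Some g4)]
        [:: (e1, up A e1, Some k1); (e2, up A e2, Some k2);
            (e3, Some g3, lo A e3); (e4, Some g4, lo A e4)].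

Definition c_step (A B : flow) : Prop := c1_step A B \/ c2_step A B \/ c3_step A B.

Inductive c_star : flow -> flow -> Prop :=
  | c_star_refl A : c_star A A
  | c_star_step A B C : c_step A B -> c_star B C -> c_star A C.

(* The c-rules only create contractions, cocontractions, cuts and interactions, so an
   edge all of whose ends are new is never a w-redex.  An old edge that keeps one end
   gets, at its other end, a vertex of the same class as before (contraction or cut
   becoming cut or cocontraction below it; interaction or cocontraction becoming
   contraction or interaction above it), so it would be a w-redex afterwards only if
   it was one already.
   To iterate this along a rewrite sequence we carry the part of atomicity that the
   rewrites visibly preserve: edge ends are vertices, no loops, and the arity bounds
   the number of incident edges; this is exactly what pins down the edges around a
   redex. *)

From mathcomp Require Import all_boot.

Set Implicit Arguments.
Unset Strict Implicit.
Unset Printing Implicit Defensive.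

(* Rewriting does not keep the vertex and edge lists duplicate-free, so arities are
   stated as bounds on the number of distinct incident edges. *)
Definition at_most (n : nat) (P : pred nat) :=
  forall s, uniq s -> all P s -> size s <= n.

Lemma at_most_seq (P : pred nat) (r : seq nat) : {subset P <= r} -> at_most (size r) P.
Proof. by move=> sPr s us /allP sP; apply: (uniq_leq_size us) => x /sP /sPr. Qed.

Lemma at_most_le m n P : m <= n -> at_most m P -> at_most n P.
Proof. by move=> le_mn hP s us sP; apply: leq_trans (hP s us sP) le_mn. Qed.

Lemma at_most_sub n (P Q : pred nat) : {subset Q <= P} -> at_most n P -> at_most n Q.
Proof.
by move=> sQP hP s us /allP sQ; apply: hP => //; apply/allP => x /sQ /sQP.
Qed.

Lemma at_most_mem n P s x :
  at_most n P -> uniq s -> all P s -> size s = n -> P x -> x \in s.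
Proof.
move=> hP us sP ss Px; apply/negPn/negP => sx.
by have := hP (x :: s); rewrite /= sx us Px sP -ss ltnn => /(_ isT isT).
Qed.

Definition is_upper_edge (A : flow) (v : nat) : pred nat :=
  [pred e | (e \in fE A) && (lo A e == Some v)].
Definition is_lower_edge (A : flow) (v : nat) : pred nat :=
  [pred e | (e \in fE A) && (up A e == Some v)].

Record wf_flow (A : flow) : Prop := WfFlow {
  wf_up_in : forall e v, e \in fE A -> up A e = Some v -> v \in fV A;
  wf_lo_in : forall e v, e \in fE A -> lo A e = Some v -> v \in fV A;
  wf_upper : forall v, v \in fV A -> at_most (arity (lab A v)).1 (is_upper_edge A v);
  wf_lower : forall v, v \in fV A -> at_most (arity (lab A v)).2 (is_lower_edge A v);
  wf_no_loop : forall e v, e \in fE A -> lo A e = Some v -> up A e != Some v }.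

Lemma atomic_flow_wf A : atomic_flow A -> wf_flow A.
Proof.
case=> _ [_ [upA [loA [arA [acyclic _]]]]]; split=> //.
- move=> v /arA [<- _]; apply: at_most_seq => e.
  by rewrite inE mem_filter andbC.
- move=> v /arA [_ <-]; apply: at_most_seq => e.
  by rewrite inE mem_filter andbC.
- move=> e v eA le; apply/eqP => ue; have := acyclic [:: e] isT.
  by rewrite /= eA /follows le ue eqxx => /(_ isT).
Qed.

Lemma wf_upper_sub A v s : wf_flow A -> v \in fV A -> uniq s ->
  size s = (arity (lab A v)).1 -> all (is_upper_edge A v) s ->
  {subset is_upper_edge A v <= s}.
Proof. by move=> wfA vA us ss sv x; apply: at_most_mem (wf_upper wfA vA) us sv ss. Qed.

Lemma wf_lower_sub A v s : wf_flow A -> v \in fV A -> uniq s ->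
  size s = (arity (lab A v)).2 -> all (is_lower_edge A v) s ->
  {subset is_lower_edge A v <= s}.
Proof. by move=> wfA vA us ss sv x; apply: at_most_mem (wf_lower wfA vA) us sv ss. Qed.

Definition w_redex (ku kl : kind) : bool :=
  (ku == Wk) && (kl \in [:: Ctr; Cut; Coctr; Cowk]) ||
  (kl == Cowk) && (ku \in [:: Coctr; Int; Ctr]).

Lemma normal_wP A : normal_w A <->
  forall e w v, e \in fE A -> up A e = Some w -> lo A e = Some v ->
    ~~ w_redex (lab A w) (lab A v).
Proof.
split=> [[wk cowk] e w v eA ue le | H].
  move: (wk e w v eA ue le) (cowk e v w eA le ue).
  by case: (lab A w); case: (lab A v) => //= h1 h2; exfalso; tauto.
split=> [e w v eA ue le | e c v eA lc uv];
  [move: (H e w v eA ue le) | move: (H e v c eA uv lc)].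
  by case: (lab A w); case: (lab A v) => //=; intuition discriminate.
by case: (lab A c); case: (lab A v) => //=; intuition discriminate.
Qed.

Lemma w_redex_fresh ku kl :
  ku \notin [:: Wk; Cowk] -> kl \notin [:: Wk; Cowk] -> ~~ w_redex ku kl.
Proof. by case: ku; case: kl. Qed.

Lemma w_redex_move_lo ku km kl : km \in [:: Ctr; Cut; Coctr] ->
  kl \notin [:: Wk; Cowk] -> ~~ w_redex ku km -> ~~ w_redex ku kl.
Proof. by case: ku; case: km; case: kl. Qed.

Lemma w_redex_move_up ku km kl : km \in [:: Coctr; Int; Ctr] ->
  ku \notin [:: Wk; Cowk] -> ~~ w_redex km kl -> ~~ w_redex ku kl.
Proof. by case: ku; case: km; case: kl. Qed.

Lemma replaced_ends A B dV dE nV nE md x u l :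
  replaced A B dV dE nV nE md -> (x, u, l) \in nE ++ md -> up B x = u /\ lo B x = l.
Proof. by case=> _ [_ [_ [_ [_ [_ [ends _]]]]]]; apply: ends. Qed.

Lemma replaced_fresh A B dV dE nV nE md v :
  replaced A B dV dE nV nE md -> v \in map fst nV -> v \notin fV A.
Proof. by case=> [[_ /allP fresh] _] /fresh. Qed.

(* A patch (x, iu, il) describes the edge x of the rewritten flow: an end [Some i] is
   the i-th new vertex (by its position in the list nV of the rule), an end [None] is
   the corresponding end of x in the old flow.  Indices rather than names make the
   side conditions on the new vertices decidable by computation. *)
Definition patch := (nat * option nat * option nat)%type.

Definition new_vertex (nV : seq (nat * kind)) i := (nth (0, Int) nV i).1.
Definition new_kind (nV : seq (nat * kind)) i := (nth (0, Int) nV i).2.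

Definition patch_end (nV : seq (nat * kind)) (old : option nat) (ix : option nat) :=
  if ix is Some i then Some (new_vertex nV i) else old.

Definition patch_triple (A : flow) (nV : seq (nat * kind)) (p : patch) :=
  let: (x, iu, il) := p in (x, patch_end nV (up A x) iu, patch_end nV (lo A x) il).

Definition avoids (dV : seq nat) (o : option nat) := all (fun v => o != Some v) dV.
Arguments avoids : simpl never.

Lemma avoidsE dV v : avoids dV (Some v) = (v \notin dV).
Proof. by rewrite /avoids; elim: dV => //= w dV ->; rewrite inE negb_or. Qed.

(* The moved end of a moved edge was attached to a vertex whose kind forbids a
   weakening above it (resp. a coweakening below it); its other end is not deleted. *)
Definition patch_ok (A : flow) dV (nV : seq (nat * kind)) (p : patch) : bool :=
  let: (x, iu, il) := p in
  match iu, il with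
  | Some i, Some j => [&& i < size nV, j < size nV & i != j]
  | None, Some j => [&& j < size nV, x \in fE A, avoids dV (up A x) &
                        if lo A x is Some m then lab A m \in [:: Ctr; Cut; Coctr] else false]
  | Some i, None => [&& i < size nV, x \in fE A, avoids dV (lo A x) &
                        if up A x is Some m then lab A m \in [:: Coctr; Int; Ctr] else false]
  | None, None => false
  end.

Definition new_arity_ok (nV : seq (nat * kind)) (ds : seq patch) i : bool :=
  (count (fun p : patch => p.2 == Some i) ds <= (arity (new_kind nV i)).1) &&
  (count (fun p : patch => p.1.2 == Some i) ds <= (arity (new_kind nV i)).2).

Section Patching.

Variables (A B : flow) (dV dE : seq nat) (nV : seq (nat * kind))
  (nE md : seq (nat * option nat * option nat)) (ds : seq patch).

Hypothesis wfA : wf_flow A.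
Hypothesis normA : normal_w A.
Hypothesis AB : replaced A B dV dE nV nE md.
Hypothesis dsE : nE ++ md = map (patch_triple A nV) ds.
Hypothesis ds_ok : all (patch_ok A dV nV) ds.
Hypothesis new_kinds : all (fun vk : nat * kind => vk.2 \notin [:: Wk; Cowk]) nV.
Hypothesis new_arity : all (new_arity_ok nV ds) (iota 0 (size nV)).
Hypothesis dV_edges : forall v x, v \in dV ->
  is_upper_edge A v x || is_lower_edge A v x -> x \in dE ++ map (fun t => t.1.1) md.

Lemma new_vertex_mem i : i < size nV -> new_vertex nV i \in map fst nV.
Proof. by move=> ilt; rewrite /new_vertex -(nth_map _ 0) ?mem_nth ?size_map. Qed.

Lemma new_vertex_fresh i : i < size nV -> new_vertex nV i \notin fV A.
Proof. by move/new_vertex_mem; apply: replaced_fresh AB. Qed.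

Lemma new_vertex_inj i j : i < size nV -> j < size nV ->
  new_vertex nV i = new_vertex nV j -> i = j.
Proof.
case: AB => [[uV _] _] ilt jlt; rewrite /new_vertex -!(nth_map _ 0) // => /eqP.
by rewrite nth_uniq ?size_map // => /eqP.
Qed.

Lemma new_vertex_in i : i < size nV -> new_vertex nV i \in fV B.
Proof. by case: AB => _ [_ [-> _]] /new_vertex_mem ->; rewrite orbT. Qed.

Lemma lab_new_vertex i : i < size nV -> lab B (new_vertex nV i) = new_kind nV i.
Proof.
case: AB => _ [_ [_ [_ [labN _]]]] ilt; apply: labN.
by rewrite /new_vertex /new_kind -surjective_pairing mem_nth.
Qed.

Lemma new_kind_ok i : i < size nV -> new_kind nV i \notin [:: Wk; Cowk].
Proof. by move=> ilt; apply: (allP new_kinds); rewrite mem_nth. Qed.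

Lemma kept_vertex v : v \in fV A -> v \notin dV -> v \in fV B /\ lab B v = lab A v.
Proof.
by case: AB => _ [_ [-> [labK _]]] vA vd; rewrite vA vd labK.
Qed.

Lemma vertex_cases v : v \in fV B ->
  (v \in fV A /\ v \notin dV) \/ exists2 i, i < size nV & v = new_vertex nV i.
Proof.
case: AB => _ [_ [-> _]] /orP[/andP[]|vN]; first by left.
right; exists (index v (map fst nV)); first by rewrite -(size_map fst) index_mem.
by rewrite /new_vertex -(nth_map _ 0) ?nth_index // -(size_map fst) index_mem.
Qed.

Lemma kept_edge_avoids x : x \in fE A -> x \notin dE ++ map (fun t => t.1.1) md ->
  avoids dV (up A x) && avoids dV (lo A x).
Proof.
move=> xA xdm; apply/andP; split; apply/allP => v vd; apply/eqP => xv;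
  move: xdm; rewrite (dV_edges (x := x) vd) // /is_upper_edge /is_lower_edge /=;
  by rewrite xA xv eqxx ?orbT.
Qed.

Lemma patch_edgeP t : t \in nE ++ md -> exists iu il,
  [/\ (t.1.1, iu, il) \in ds, up B t.1.1 = patch_end nV (up A t.1.1) iu
    & lo B t.1.1 = patch_end nV (lo A t.1.1) il].
Proof.
case: t => [[y u] l] tin; have [-> ->] := replaced_ends AB tin.
move: tin; rewrite dsE => /mapP[[[y' iu] il] yin [-> -> ->]].
by exists iu, il.
Qed.

Lemma patched_edgeP x : x \in fE B ->
  [/\ x \in fE A, avoids dV (up A x), avoids dV (lo A x), up B x = up A x
    & lo B x = lo A x] \/
  exists iu il, [/\ (x, iu, il) \in ds, up B x = patch_end nV (up A x) iu
    & lo B x = patch_end nV (lo A x) il].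
Proof.
case: AB => _ [_ [_ [_ [_ [-> [_ keep]]]]]] /orP[/andP[xA xd]|xnE].
  case xm: (x \in map (fun t => t.1.1) md).
    by right; case/mapP: xm => t tin ->; apply: patch_edgeP; rewrite mem_cat tin orbT.
  have [uK lK] := keep x xA xd (negbT xm).
  have /andP[au al] : avoids dV (up A x) && avoids dV (lo A x).
    by apply: kept_edge_avoids; rewrite // mem_cat (negbTE xd) xm.
  by left.
by right; case/mapP: xnE => t tin ->; apply: patch_edgeP; rewrite mem_cat tin.
Qed.

Lemma patched_upP x : x \in fE B ->
  [/\ x \in fE A, avoids dV (up A x) & up B x = up A x] \/
  exists i il, [/\ (x, Some i, il) \in ds, i < size nV & up B x = Some (new_vertex nV i)].
Proof.
case/patched_edgeP => [[xA au _ -> _]|[[i|] [il [xin -> _]]]]; first by left.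
  right; exists i, il; split=> //.
  by have := allP ds_ok _ xin; case: il {xin} => [j /and3P[]|/and4P[]].
by have := allP ds_ok _ xin; case: il {xin} => // j /and4P[_ xA au _]; left.
Qed.

Lemma patched_loP x : x \in fE B ->
  [/\ x \in fE A, avoids dV (lo A x) & lo B x = lo A x] \/
  exists iu i, [/\ (x, iu, Some i) \in ds, i < size nV & lo B x = Some (new_vertex nV i)].
Proof.
case/patched_edgeP => [[xA _ al _ ->]|[iu [[i|] [xin _ ->]]]]; first by left.
  right; exists iu, i; split=> //.
  by have := allP ds_ok _ xin; case: iu {xin} => [j /and3P[]|/and4P[]].
by have := allP ds_ok _ xin; case: iu {xin} => // j /and4P[_ xA al _]; left.
Qed.

Lemma patched_upper v : v \in fV B -> at_most (arity (lab B v)).1 (is_upper_edge B v).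
Proof.
case/vertex_cases => [[vA vd]|[i ilt ->]].
  have [_ ->] := kept_vertex vA vd; apply: at_most_sub (wf_upper wfA vA) => x.
  rewrite !inE => /andP[xB /eqP lx]; case/patched_loP: xB => [[xA _ lA]|[iu [j [_ jlt lj]]]].
    by rewrite xA -lA lx eqxx.
  by move: vA; rewrite lx in lj; case: lj => ->; rewrite (negbTE (new_vertex_fresh jlt)).
rewrite lab_new_vertex //.
have /andP[cnt _] : new_arity_ok nV ds i by apply: (allP new_arity); rewrite mem_iota.
apply: at_most_le cnt _; rewrite -size_filter -(size_map (fun p : patch => p.1.1)).
apply: at_most_seq => x; rewrite inE => /andP[xB /eqP lx].
case/patched_loP: xB => [[xA _ lA]|[iu [j [xin jlt lj]]]].
  by have := wf_lo_in wfA xA (etrans (esym lA) lx); rewrite (negbTE (new_vertex_fresh ilt)).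
have ji : j = i by apply: new_vertex_inj => //; congruence.
by subst j; apply/mapP; exists (x, iu, Some i); rewrite // mem_filter eqxx.
Qed.

Lemma patched_lower v : v \in fV B -> at_most (arity (lab B v)).2 (is_lower_edge B v).
Proof.
case/vertex_cases => [[vA vd]|[i ilt ->]].
  have [_ ->] := kept_vertex vA vd; apply: at_most_sub (wf_lower wfA vA) => x.
  rewrite !inE => /andP[xB /eqP ux]; case/patched_upP: xB => [[xA _ uA]|[j [il [_ jlt uj]]]].
    by rewrite xA -uA ux eqxx.
  by move: vA; rewrite ux in uj; case: uj => ->; rewrite (negbTE (new_vertex_fresh jlt)).
rewrite lab_new_vertex //.
have /andP[_ cnt] : new_arity_ok nV ds i by apply: (allP new_arity); rewrite mem_iota.
apply: at_most_le cnt _; rewrite -size_filter -(size_map (fun p : patch => p.1.1)).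
apply: at_most_seq => x; rewrite inE => /andP[xB /eqP ux].
case/patched_upP: xB => [[xA _ uA]|[j [il [xin jlt uj]]]].
  by have := wf_up_in wfA xA (etrans (esym uA) ux); rewrite (negbTE (new_vertex_fresh ilt)).
have ji : j = i by apply: new_vertex_inj => //; congruence.
by subst j; apply/mapP; exists (x, Some i, il); rewrite // mem_filter eqxx.
Qed.

Lemma patched_no_loop x v : x \in fE B -> lo B x = Some v -> up B x != Some v.
Proof.
case/patched_edgeP => [[xA _ _ -> ->]|[iu [il [xin -> ->]]]]; first exact: wf_no_loop.
move=> lv; apply/eqP; move: lv; have := allP ds_ok _ xin; case: iu il {xin} => [i|] [j|] //=.
- case/and3P=> ilt jlt /eqP ij [vj] [vi]; apply: ij; apply: new_vertex_inj; congruence.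
- case/and4P=> ilt xA _ _ lx [vi]; have := wf_lo_in wfA xA lx.
  by rewrite -vi (negbTE (new_vertex_fresh ilt)).
- case/and4P=> jlt xA _ _ [vj] ux; have := wf_up_in wfA xA ux.
  by rewrite -vj (negbTE (new_vertex_fresh jlt)).
Qed.

Lemma patched_normal : normal_w B.
Proof.
have kept_lab x v : x \in fE A ->
    up A x = Some v /\ avoids dV (up A x) \/ lo A x = Some v /\ avoids dV (lo A x) ->
    lab B v = lab A v.
  move=> xA ends; apply: (kept_vertex _ _).2.
    by case: ends => [[/(wf_up_in wfA xA)]|[/(wf_lo_in wfA xA)]].
  by case: ends => [[-> ]|[->]]; rewrite avoidsE.
have redexA := (normal_wP A).1 normA.
apply/normal_wP => x w v; case/patched_edgeP => [[xA aw av -> ->] uw lv|[iu [il [xin -> ->]]]].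
  by rewrite (kept_lab x w xA) ?(kept_lab x v xA); [exact: redexA xA uw lv|right|left].
have := allP ds_ok _ xin; case: iu il {xin} => [i|] [j|] //=.
- case/and3P=> ilt jlt _ [<-] [<-]; rewrite !lab_new_vertex //.
  by apply: w_redex_fresh; apply: new_kind_ok.
- case/and4P=> ilt xA al; case um: (up A x) => [m|] // mk [<-] lv.
  rewrite lab_new_vertex // (kept_lab x v xA); last by right.
  exact: w_redex_move_up mk (new_kind_ok ilt) (redexA x m v xA um lv).
- case/and4P=> jlt xA au; case lm: (lo A x) => [m|] // mk uw [<-].
  rewrite lab_new_vertex // (kept_lab x w xA); last by left.
  exact: w_redex_move_lo mk (new_kind_ok jlt) (redexA x w m xA uw lm).
Qed.

Lemma patched_wf_normal : wf_flow B /\ normal_w B.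
Proof.
split; last exact: patched_normal.
split; [| |exact: patched_upper|exact: patched_lower|exact: patched_no_loop].
- move=> x v /patched_upP[[xA au ->] uv|[i [il [_ ilt ->]]] [<-]]; last exact: new_vertex_in.
  by apply: (kept_vertex _ _).1; [exact: wf_up_in uv|rewrite -avoidsE -uv].
- move=> x v /patched_loP[[xA al ->] lv|[iu [i [_ ilt ->]]] [<-]]; last exact: new_vertex_in.
  by apply: (kept_vertex _ _).1; [exact: wf_lo_in lv|rewrite -avoidsE -lv].
Qed.

End Patching.

Lemma c1_step_wf_normal A B :
  wf_flow A -> normal_w A -> c1_step A B -> wf_flow B /\ normal_w B.
Proof.
move=> wfA nA [g [k [e1 [e2 [e [e3 [gA [kA [lg [lk [e1A [e2A [eA [e3A
  [e12 [le1 [le2 [ue [le [e3e [le3 [k' [c1 [c2 [d1 [d2 AB]]]]]]]]]]]]]]]]]]]]]]]]]].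
have up_g : {subset is_upper_edge A g <= [:: e1; e2]}.
  apply: wf_upper_sub; rewrite ?lg //= ?inE ?e12 // /is_upper_edge /=.
  by rewrite e1A e2A le1 le2 eqxx.
have lo_g : {subset is_lower_edge A g <= [:: e]}.
  by apply: wf_lower_sub; rewrite ?lg //= /is_lower_edge /= eA ue eqxx.
have up_k : {subset is_upper_edge A k <= [:: e; e3]}.
  apply: wf_upper_sub; rewrite ?lk //= ?inE 1?eq_sym ?e3e // /is_upper_edge /=.
  by rewrite eA e3A le le3 eqxx.
have lo_k : {subset is_lower_edge A k <= [::]} by apply: wf_lower_sub; rewrite ?lk.
have avoid_up x : x \in fE A -> lo A x = Some g -> avoids [:: g; k] (up A x).
  move=> xA lx; rewrite /avoids /= (wf_no_loop wfA xA lx) andbT.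
  by apply/eqP => ux; have := lo_k x; rewrite inE xA ux eqxx => /(_ isT).
have avoid_e3 : avoids [:: g; k] (up A e3).
  rewrite /avoids /= (wf_no_loop wfA e3A le3) !andbT.
  by apply/eqP => ux; have := lo_g e3; rewrite inE e3A ux eqxx inE (negbTE e3e) => /(_ isT).
apply: (patched_wf_normal (ds := [:: (d1, Some 0, Some 1); (d2, Some 0, Some 2);
  (e1, None, Some 1); (e2, None, Some 2); (e3, None, Some 0)]) wfA nA AB erefl) => //.
  by rewrite /= e1A e2A e3A le1 le2 le3 lg lk avoid_e3 !avoid_up.
move=> v x; rewrite !inE => /orP[]/eqP-> /orP[];
  [move/up_g|move/lo_g|move/up_k|by move/lo_k]; rewrite /= !inE;
  by do ?case/orP; move/eqP->; rewrite eqxx ?orbT.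
Qed.

Lemma c2_step_wf_normal A B :
  wf_flow A -> normal_w A -> c2_step A B -> wf_flow B /\ normal_w B.
Proof.
move=> wfA nA [i [k [e3 [e4 [e1 [e2 [iA [kA [li [lk [e1A [e2A [e3A [e4A
  [e34 [ue3 [ue4 [le4 [e12 [ue1 [ue2 [g [i1 [i2 [d1 [d2 AB]]]]]]]]]]]]]]]]]]]]]]]]]].
have up_i : {subset is_upper_edge A i <= [::]} by apply: wf_upper_sub; rewrite ?li.
have lo_i : {subset is_lower_edge A i <= [:: e3; e4]}.
  apply: wf_lower_sub; rewrite ?li //= ?inE ?e34 // /is_lower_edge /=.
  by rewrite e3A e4A ue3 ue4 eqxx.
have up_k : {subset is_upper_edge A k <= [:: e4]}.
  by apply: wf_upper_sub; rewrite ?lk //= /is_upper_edge /= e4A le4 eqxx.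
have lo_k : {subset is_lower_edge A k <= [:: e1; e2]}.
  apply: wf_lower_sub; rewrite ?lk //= ?inE ?e12 // /is_lower_edge /=.
  by rewrite e1A e2A ue1 ue2 eqxx.
have avoid_lo x : x \in fE A -> up A x = Some k -> avoids [:: i; k] (lo A x).
  move=> xA ux; rewrite /avoids /= andbT; apply/andP; split; apply/eqP => lx.
    by have := up_i x; rewrite inE xA lx eqxx => /(_ isT).
  by have := wf_no_loop wfA xA lx; rewrite ux eqxx.
have avoid_e3 : avoids [:: i; k] (lo A e3).
  rewrite /avoids /= andbT; apply/andP; split; apply/eqP => lx.
    by have := wf_no_loop wfA e3A lx; rewrite ue3 eqxx.
  by have := up_k e3; rewrite inE e3A lx eqxx inE (negbTE e34) => /(_ isT).
apply: (patched_wf_normal (ds := [:: (d1, Some 1, Some 0); (d2, Some 2, Some 0);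
  (e3, Some 0, None); (e1, Some 1, None); (e2, Some 2, None)]) wfA nA AB erefl) => //.
  by rewrite /= e1A e2A e3A ue1 ue2 ue3 li lk avoid_e3 !avoid_lo.
move=> v x; rewrite !inE => /orP[]/eqP-> /orP[];
  [by move/up_i|move/lo_i|move/up_k|move/lo_k]; rewrite /= !inE;
  by do ?case/orP; move/eqP->; rewrite eqxx ?orbT.
Qed.

Lemma c3_step_wf_normal A B :
  wf_flow A -> normal_w A -> c3_step A B -> wf_flow B /\ normal_w B.
Proof.
move=> wfA nA [g [k [e1 [e2 [e [e3 [e4 [gA [kA [lg [lk [e1A [e2A [eA [e3A [e4A
  [e12 [le1 [le2 [ue [le [e34 [ue3 [ue4
  [k1 [k2 [g3 [g4 [f13 [f14 [f23 [f24 AB]]]]]]]]]]]]]]]]]]]]]]]]]]]]]]]].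
have up_g : {subset is_upper_edge A g <= [:: e1; e2]}.
  apply: wf_upper_sub; rewrite ?lg //= ?inE ?e12 // /is_upper_edge /=.
  by rewrite e1A e2A le1 le2 eqxx.
have lo_g : {subset is_lower_edge A g <= [:: e]}.
  by apply: wf_lower_sub; rewrite ?lg //= /is_lower_edge /= eA ue eqxx.
have up_k : {subset is_upper_edge A k <= [:: e]}.
  by apply: wf_upper_sub; rewrite ?lk //= /is_upper_edge /= eA le eqxx.
have lo_k : {subset is_lower_edge A k <= [:: e3; e4]}.
  apply: wf_lower_sub; rewrite ?lk //= ?inE ?e34 // /is_lower_edge /=.
  by rewrite e3A e4A ue3 ue4 eqxx.
have [_ lo_e1] : up B e1 = up A e1 /\ lo B e1 = Some k1.
  by apply: replaced_ends AB _; rewrite !inE eqxx !orbT.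
have [_ lo_e2] : up B e2 = up A e2 /\ lo B e2 = Some k2.
  by apply: replaced_ends AB _; rewrite !inE eqxx !orbT.
have [_ lo_e3] : up B e3 = Some g3 /\ lo B e3 = lo A e3.
  by apply: replaced_ends AB _; rewrite !inE eqxx !orbT.
have [_ lo_e4] : up B e4 = Some g4 /\ lo B e4 = lo A e4.
  by apply: replaced_ends AB _; rewrite !inE eqxx !orbT.
(* wf_flow cannot exclude a cycle g -> k -> g, but the rule itself moves the lower
   ends of e1, e2 and keeps those of e3, e4, so these edges are distinct. *)
have apart x : x \in [:: e1; e2] -> lo A x = Some g -> x \notin [:: e3; e4].
  move=> x12 lx; apply/negP => x34.
  have [kx kxN lBx] : exists2 kx, kx \in [:: k1; k2; g3; g4] & lo B x = Some kx.
    move: x12; rewrite !inE => /orP[]/eqP->; [exists k1 | exists k2];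
    by rewrite ?inE ?eqxx ?orbT.
  have : lo B x = lo A x by move: x34; rewrite !inE => /orP[]/eqP->.
  by rewrite lBx lx => -[kxg]; move: (replaced_fresh AB kxN); rewrite kxg gA.
have avoid_up x : x \in [:: e1; e2] -> avoids [:: g; k] (up A x).
  move=> x12; have [xA lx] : x \in fE A /\ lo A x = Some g.
    by move: x12; rewrite !inE => /orP[]/eqP->.
  rewrite /avoids /= (wf_no_loop wfA xA lx) andbT; apply/eqP => ux.
  by have := lo_k x; rewrite inE xA ux eqxx => /(_ isT); apply/negP; apply: apart.
have avoid_lo y : y \in [:: e3; e4] -> avoids [:: g; k] (lo A y).
  move=> y34; have [yA uy] : y \in fE A /\ up A y = Some k.
    by move: y34; rewrite !inE => /orP[]/eqP->.
  rewrite /avoids /= andbT; apply/andP; split; apply/eqP => ly.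
    by have := up_g y; rewrite inE yA ly eqxx => /(_ isT) /apart /(_ ly); rewrite y34.
  by have := wf_no_loop wfA yA ly; rewrite uy eqxx.
apply: (patched_wf_normal (ds := [:: (f13, Some 0, Some 2); (f14, Some 0, Some 3);
  (f23, Some 1, Some 2); (f24, Some 1, Some 3); (e1, None, Some 0); (e2, None, Some 1);
  (e3, Some 2, None); (e4, Some 3, None)]) wfA nA AB erefl) => //.
  by rewrite /= e1A e2A e3A e4A le1 le2 ue3 ue4 lg lk !avoid_up ?avoid_lo // !inE eqxx ?orbT.
move=> v x; rewrite !inE => /orP[]/eqP-> /orP[];
  [move/up_g|move/lo_g|move/up_k|move/lo_k]; rewrite /= !inE;
  by do ?case/orP; move/eqP->; rewrite eqxx ?orbT.
Qed.

Lemma c_step_wf_normal A B :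
  wf_flow A -> normal_w A -> c_step A B -> wf_flow B /\ normal_w B.
Proof.
move=> wfA nA [st|[st|st]];
  [exact: c1_step_wf_normal st|exact: c2_step_wf_normal st|exact: c3_step_wf_normal st].
Qed.

Lemma c_star_normal A B : wf_flow A -> normal_w A -> c_star A B -> normal_w B.
Proof.
move=> + + AB; elim: AB => // {}A {}B C st _ IH wfA nA.
by have [wfB nB] := c_step_wf_normal wfA nA st; apply: IH.
Qed.

Theorem proposition4p20 (A B : flow) :
  atomic_flow A -> normal_w A -> c_star A B -> normal_w B.
Proof. by move/atomic_flow_wf; apply: c_star_normal. Qed.
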